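(* Let $(X,\varphi)$ be a convex geometry and suppose the lattice $L:=Cl(X,\varphi)$ is weakly atomic. Then $L$ is spatial. Moreover, there exist a subset $Y\subseteq X$ and a closure operator $\psi$ on $Y$ satisfying the anti-exchange axiom such that $L$ is isomorphic to $Cl(Y,\psi)$ and $\psi(\{y\})$ is completely join-irreducible in $Cl(Y,\psi)$ for every $y\in Y$.
   Context: A convex geometry is a pair $(X,\varphi)$ where $X$ is a non-empty set and $\varphi$ is a closure operator on $X$ with $\varphi(\emptyset)=\emptyset$ satisfying the anti-exchange axiom: for all $\varphi$-closed $A$ and all $x\neq y$ in $X$, if $x\in\varphi(A\cup\{y\})$ and $x\notin A$ then $y\notin\varphi(A\cup\{x\})$. $Cl(X,\varphi)$ is the complete lattice of $\varphi$-closed sets ordered by inclusion. A lattice is weakly atomic if every interval $[a,b]$ with $a<b$ contains a cover $c\prec d$. An element $y$ of a complete lattice is completely join-irreducible if it has a lower cover $y_*$ such that $z<y$ implies $z\leq y_*$. A complete lattice is spatial if every element is a join of completely join-irreducible elements. *)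

(* sets are predicates T -> Prop; set equality is Leibniz
   (with functional/propositional extensionality available). *)
Set Implicit Arguments.

Definition subset {T : Type} (A B : T -> Prop) : Prop := forall x, A x -> B x.
Definition proper {T : Type} (A B : T -> Prop) : Prop := subset A B /\ ~ subset B A.
Definition emptyset {T : Type} : T -> Prop := fun _ => False.
Definition single {T : Type} (a : T) : T -> Prop := fun x => x = a.
Definition add {T : Type} (A : T -> Prop) (a : T) : T -> Prop := fun x => A x \/ x = a.

Section ClosureSystems.
Variable T : Type.
Variable phi : (T -> Prop) -> (T -> Prop).

Definition closure_operator : Prop :=
  (forall A, subset A (phi A)) /\
  (forall A B, subset A B -> subset (phi A) (phi B)) /\
  (forall A, phi (phi A) = phi A).

Definition closed (A : T -> Prop) : Prop := phi A = A.

Definition anti_exchange : Prop :=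
  forall (A : T -> Prop) (x y : T), closed A -> x <> y ->
    phi (add A y) x -> ~ A x -> ~ phi (add A x) y.

Definition convex_geometry : Prop :=
  inhabited T /\ closure_operator /\ phi emptyset = emptyset /\ anti_exchange.

(* The lattice Cl(T, phi): closed sets ordered by inclusion. *)

Definition covers (c d : T -> Prop) : Prop :=
  closed c /\ closed d /\ proper c d /\
  forall e, closed e -> proper c e -> proper e d -> False.

Definition weakly_atomic : Prop :=
  forall a b, closed a -> closed b -> proper a b ->
    exists c d, subset a c /\ subset d b /\ covers c d.

Definition compl_join_irreducible (y : T -> Prop) : Prop :=
  closed y /\ exists ys, covers ys y /\ forall z, closed z -> proper z y -> subset z ys.

Definition is_join (S : (T -> Prop) -> Prop) (A : T -> Prop) : Prop :=
  closed A /\ (forall y, S y -> subset y A) /\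
  (forall B, closed B -> (forall y, S y -> subset y B) -> subset A B).

Definition spatial : Prop :=
  forall A, closed A -> exists S : (T -> Prop) -> Prop,
    (forall y, S y -> closed y /\ compl_join_irreducible y) /\ is_join S A.
End ClosureSystems.

Definition lattice_iso {T U : Type} (phi : (T -> Prop) -> (T -> Prop))
  (psi : (U -> Prop) -> (U -> Prop)) : Prop :=
  exists f : (T -> Prop) -> (U -> Prop),
    (forall A, closed phi A -> closed psi (f A)) /\
    (forall B, closed psi B -> exists A, closed phi A /\ f A = B) /\
    (forall A A', closed phi A -> closed phi A' ->
       (subset A A' <-> subset (f A) (f A'))).

From Stdlib Require Import Classical FunctionalExtensionality PropExtensionality ProofIrrelevance.

(* If a closed set A contains a point x outside a closed set B, weak atomicity
   gives a cover c < d inside the interval [A /\ B, A].  Anti-exchange forces d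
   to contain exactly one point e outside c, and then phi{e} /\ c is the unique
   lower cover of phi{e}: so phi{e} is completely join-irreducible, lies below A
   and not below B.  Hence every closed set is the join of the completely
   join-irreducible closures of its points, and the points e with phi{e}
   completely join-irreducible already separate closed sets, so restricting phi
   to them yields an isomorphic lattice. *)

Lemma set_ext {T : Type} (A B : T -> Prop) : (forall x, A x <-> B x) -> A = B.
Proof.
  intro H; apply functional_extensionality; intro x; apply propositional_extensionality; auto.
Qed.

Section ClosureOperator.

Context {T : Type} {phi : (T -> Prop) -> (T -> Prop)}.
Hypothesis co : closure_operator phi.

Lemma closure_closed A : closed phi (phi A).
Proof. apply (proj2 (proj2 co)). Qed.

Lemma closure_single_subset {A e} : closed phi A -> A e -> subset (phi (single e)) A.
Proof.
  intros HA Ae. rewrite <- HA. apply (proj1 (proj2 co)). intros u ->; exact Ae.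
Qed.

Lemma closed_setI {A B} : closed phi A -> closed phi B -> closed phi (fun z => A z /\ B z).
Proof.
  destruct co as [ext [mono _]]. intros HA HB.
  apply set_ext; intro x; split; [|intro Hx; apply ext, Hx].
  intro H; split.
  - rewrite <- HA. revert H; apply mono; intros y [? ?]; auto.
  - rewrite <- HB. revert H; apply mono; intros y [? ?]; auto.
Qed.

Hypothesis ae : anti_exchange phi.

Lemma cover_point_unique {c d} (e z : T) :
  covers phi c d -> d e -> ~ c e -> d z -> ~ c z -> z = e.
Proof.
  destruct co as [ext [mono _]]. intros [Hc [Hd [[cd _] nob]]] de ce dz cz.
  assert (fill : forall w, d w -> ~ c w -> subset d (phi (add c w))).
  { intros w dw cw. apply NNPP; intro H.
    apply (nob (phi (add c w)) (closure_closed _)).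
    - split.
      + intros u cu. apply ext. left; exact cu.
      + intro H'. apply cw, H', ext. right; reflexivity.
    - split; [|exact H].
      rewrite <- Hd. apply mono. intros u [cu | ->]; auto. }
  apply NNPP; intro Hne.
  exact (ae c z e Hc Hne (fill e de ce z dz) cz (fill z dz cz e de)).
Qed.

Lemma cji_of_cover_point {c d} (e : T) :
  covers phi c d -> d e -> ~ c e -> compl_join_irreducible phi (phi (single e)).
Proof.
  intros cov de ce. pose proof cov as [Hc [Hd _]].
  set (ys := fun w => phi (single e) w /\ c w).
  assert (e_in : phi (single e) e) by (apply (proj1 co); reflexivity).
  assert (below : forall z, closed phi z -> proper z (phi (single e)) -> subset z ys).
  { intros z Hz [sz nz] w zw. split; [exact (sz w zw)|].
    assert (ze : ~ z e) by (intro ze; apply nz, closure_single_subset; auto).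
    apply NNPP; intro cw.
    assert (w = e) by (apply (cover_point_unique e w cov de ce); auto;
                       exact (closure_single_subset Hd de w (sz w zw))).
    subst; auto. }
  assert (Hys : closed phi ys) by (apply closed_setI; [apply closure_closed | exact Hc]).
  split; [apply closure_closed|]. exists ys. split; [|exact below].
  split; [exact Hys|]. split; [apply closure_closed|]. split.
  - split; [intros u [? ?]; auto|]. intro H. apply ce, (H e e_in).
  - intros f Hf [_ n1] p2. apply n1, below; auto.
Qed.

Hypothesis wa : weakly_atomic phi.

Lemma cji_point_separates {A B} (x : T) :
  closed phi A -> closed phi B -> A x -> ~ B x ->
  exists e, A e /\ ~ B e /\ compl_join_irreducible phi (phi (single e)).
Proof.
  intros HA HB Ax Bx.
  destruct (wa _ _ (closed_setI HA HB) HA) as [c [d [bc [dA cov]]]].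
  { split; [intros u [? ?]; auto|]. intro H. apply Bx, (H x Ax). }
  pose proof cov as [_ [_ [[_ ns] _]]].
  destruct (not_all_ex_not _ _ ns) as [e He].
  assert (de : d e) by (apply NNPP; intro; apply He; intro; contradiction).
  assert (ce : ~ c e) by (intro; apply He; auto).
  exists e. split; [auto|]. split.
  - intro Be. apply ce, bc. auto.
  - exact (cji_of_cover_point e cov de ce).
Qed.

Lemma spatial_of_weakly_atomic : spatial phi.
Proof.
  intros A HA.
  exists (fun y => exists e, A e /\ y = phi (single e) /\ compl_join_irreducible phi y).
  split; [|split; [exact HA|split]].
  - intros y [e [_ [-> H]]]. split; [apply closure_closed | exact H].
  - intros y [e [Ae [-> _]]]. exact (closure_single_subset HA Ae).
  - intros B HB Hup x Ax. apply NNPP; intro Bx.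
    destruct (cji_point_separates x HA HB Ax Bx) as [e [Ae [Be He]]].
    apply Be, (Hup (phi (single e))); [exists e; auto|].
    apply (proj1 co). reflexivity.
Qed.

End ClosureOperator.

Section Restriction.

Context {T : Type} (phi : (T -> Prop) -> (T -> Prop)) (Y : T -> Prop).
Hypothesis co : closure_operator phi.

Definition sub_image (S : {x : T | Y x} -> Prop) : T -> Prop :=
  fun x => exists y, S y /\ proj1_sig y = x.

Definition restrict_set (A : T -> Prop) : {x : T | Y x} -> Prop :=
  fun y => A (proj1_sig y).

Definition restrict_closure (S : {x : T | Y x} -> Prop) : {x : T | Y x} -> Prop :=
  restrict_set (phi (sub_image S)).

Lemma sub_image_subset S A : subset S (restrict_set A) -> subset (sub_image S) A.
Proof. intros H x [y [Sy <-]]. exact (H y Sy). Qed.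

Lemma restrict_closure_ext S : subset S (restrict_closure S).
Proof. intros y Sy. apply (proj1 co). exists y; auto. Qed.

Lemma restrict_closure_operator : closure_operator restrict_closure.
Proof.
  destruct co as [ext [mono idem]].
  split; [exact restrict_closure_ext|split].
  - intros A B H y. apply mono. intros x [u [Au <-]]. exists u; auto.
  - intro S. apply set_ext; intro y. unfold restrict_closure, restrict_set at 1.
    split.
    + intro H. rewrite <- (idem (sub_image S)). revert H. apply mono.
      exact (sub_image_subset _ (phi (sub_image S)) (fun u Hu => Hu)).
    + apply mono. intros u [v [Sv <-]]. exists v; split; [apply restrict_closure_ext|]; auto.
Qed.

Lemma restrict_anti_exchange : anti_exchange phi -> anti_exchange restrict_closure.
Proof.
  destruct co as [ext [mono _]]. intros ae A x y HA Hxy Hx nAx Hy.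
  assert (vne : proj1_sig x <> proj1_sig y).
  { intro E. apply Hxy, (eq_sig_hprop (fun _ => proof_irrelevance _)), E. }
  assert (lift : forall z, subset (sub_image (add A z))
                                  (add (phi (sub_image A)) (proj1_sig z))).
  { intros z u [v [[Av | ->] <-]]; [left; apply ext; exists v; auto | right; reflexivity]. }
  apply (ae _ _ _ (closure_closed co _) vne (mono _ _ (lift y) _ Hx)).
  - intro H. apply nAx. rewrite <- HA. exact H.
  - exact (mono _ _ (lift x) _ Hy).
Qed.

Lemma restrict_set_closed A : closed phi A -> closed restrict_closure (restrict_set A).
Proof.
  intro HA. apply set_ext; intro y; split; [|apply restrict_closure_ext].
  intro H. unfold restrict_set. rewrite <- HA.
  apply ((proj1 (proj2 co)) (sub_image (restrict_set A))); [|exact H].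
  apply sub_image_subset. intros u Hu; exact Hu.
Qed.

Lemma restrict_set_onto B :
  closed restrict_closure B -> exists A, closed phi A /\ restrict_set A = B.
Proof. intro HB. exists (phi (sub_image B)). split; [apply closure_closed, co | exact HB]. Qed.

Lemma restrict_set_order A A' :
  (forall x, A x -> ~ A' x -> exists e, A e /\ ~ A' e /\ Y e) ->
  subset A A' <-> subset (restrict_set A) (restrict_set A').
Proof.
  intros sep. split.
  - intros H y. apply H.
  - intros H x Ax. apply NNPP; intro A'x.
    destruct (sep x Ax A'x) as [e [Ae [A'e Ye]]].
    exact (A'e (H (exist _ e Ye) Ae)).
Qed.

Lemma restrict_closure_single y :
  restrict_closure (single y) = restrict_set (phi (single (proj1_sig y))).
Proof.
  unfold restrict_closure. f_equal. f_equal.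
  apply set_ext; intro x; split.
  - intros [v [-> <-]]. reflexivity.
  - intros ->. exists y; split; reflexivity.
Qed.

End Restriction.

Lemma cji_order_iso_transfer {T U : Type} (phi : (T -> Prop) -> (T -> Prop))
  (psi : (U -> Prop) -> (U -> Prop)) (f : (T -> Prop) -> (U -> Prop)) :
  (forall A, closed phi A -> closed psi (f A)) ->
  (forall B, closed psi B -> exists A, closed phi A /\ f A = B) ->
  (forall A A', closed phi A -> closed phi A' -> (subset A A' <-> subset (f A) (f A'))) ->
  forall y, compl_join_irreducible phi y -> compl_join_irreducible psi (f y).
Proof.
  intros cl onto ord y [Hy [ys [[Hys [_ [[s ns] nob]]] low]]].
  assert (proper_f : forall A A', closed phi A -> closed phi A' ->
                       proper A A' <-> proper (f A) (f A')).
  { intros A A' HA HA'. unfold proper. rewrite !(ord _ _ HA HA'), (ord _ _ HA' HA). tauto. }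
  split; [auto|]. exists (f ys). split.
  - split; [auto|]. split; [auto|]. split; [apply proper_f; auto; split; auto|].
    intros e He p1 p2. destruct (onto e He) as [E [HE <-]].
    apply (nob E HE); [apply proper_f | apply proper_f]; auto.
  - intros z Hz pz. destruct (onto z Hz) as [Z [HZ <-]].
    apply ord; auto. apply low; auto. apply proper_f; auto.
Qed.

Theorem theorem3p1 (X : Type) (phi : (X -> Prop) -> (X -> Prop)) :
  convex_geometry phi -> weakly_atomic phi ->
  spatial phi /\
  exists (Y : X -> Prop) (psi : ({x : X | Y x} -> Prop) -> ({x : X | Y x} -> Prop)),
    closure_operator psi /\ anti_exchange psi /\
    lattice_iso phi psi /\
    (forall y : {x : X | Y x}, compl_join_irreducible psi (psi (single y))).
Proof.
  intros [_ [co [_ ae]]] wa.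
  split; [exact (spatial_of_weakly_atomic co ae wa)|].
  set (Y := fun e => compl_join_irreducible phi (phi (single e))).
  assert (order : forall A A', closed phi A -> closed phi A' ->
            subset A A' <-> subset (restrict_set Y A) (restrict_set Y A')).
  { intros A A' HA HA'. apply restrict_set_order.
    intros x Ax A'x. exact (cji_point_separates co ae wa x HA HA' Ax A'x). }
  pose proof (restrict_set_closed phi Y co) as closed_map.
  pose proof (restrict_set_onto phi Y co) as onto.
  exists Y, (restrict_closure phi Y).
  split; [exact (restrict_closure_operator phi Y co)|].
  split; [exact (restrict_anti_exchange phi Y co ae)|].
  split; [exists (restrict_set Y); auto|].
  intro y. rewrite restrict_closure_single.
  exact (cji_order_iso_transfer phi _ _ closed_map onto order _ (proj2_sig y)).
Qed.
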